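(* Let $d\ge 1$ be an integer and let $m=d^d\cdot d^3$. Then $HG(B_{d,m})\ge q$, where $q=d^d/d^2=d^{d-2}$.
   Context: The book graph $B_{d,m}$ is obtained from a complete graph on $d$ vertices (the central clique) by adding an independent set of $m$ new vertices (the outer vertices) and joining each of them to all $d$ vertices of the central clique. The hat guessing game on a finite simple graph $G$ with $q$ colors: each vertex (player) is assigned a hat whose color is an arbitrary element of a fixed set $Q$ of $q$ colors. Each player sees the hat colors of exactly its neighbors in $G$ (not its own). Before the colors are assigned, the players fix a deterministic guessing strategy: for each vertex $w$, a function from the colorings of the neighbors of $w$ to $Q$, which is $w$'s guess for its own color. No communication is allowed. The strategy is winning if for every assignment of colors from $Q$ to all vertices, at least one vertex guesses its own color correctly. The hat guessing number $HG(G)$ is the largest integer $q$ for which a winning strategy with $q$ colors exists. *)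

From mathcomp Require Import all_boot.
Set Implicit Arguments. Unset Strict Implicit. Unset Printing Implicit Defensive.

Definition sees_only_neighbours (T : finType) (adj : rel T) (q : nat)
    (f : T -> (T -> 'I_q) -> 'I_q) : Prop :=
  forall (v : T) (c c' : T -> 'I_q),
    (forall u, adj v u -> c u = c' u) -> f v c = f v c'.

Definition winning_strategy (T : finType) (adj : rel T) (q : nat)
    (f : T -> (T -> 'I_q) -> 'I_q) : Prop :=
  sees_only_neighbours adj f /\
  forall c : T -> 'I_q, exists v : T, f v c = c v.

Definition hat_winnable (T : finType) (adj : rel T) (q : nat) : Prop :=
  exists f : T -> (T -> 'I_q) -> 'I_q, winning_strategy adj f.

Definition HG_ge (T : finType) (adj : rel T) (q : nat) : Prop :=
  exists q', q <= q' /\ hat_winnable adj q'.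

(* Book graph B_{d,m}: vertices inl i (central clique, i < d) and
   inr j (outer vertices, j < m). *)
Definition book_adj (d m : nat) : rel ('I_d + 'I_m)%type :=
  fun x y =>
    match x, y with
    | inl i, inl j => i != j
    | inl _, inr _ => true
    | inr _, inl _ => true
    | inr _, inr _ => false
    end.

Arguments book_adj d m : clear implicits.

From mathcomp Require Import all_boot all_algebra zify.
Set Implicit Arguments. Unset Strict Implicit. Unset Printing Implicit Defensive.
Import GRing.Theory Num.Theory.

(* Each outer vertex j sees the whole clique colouring x and guesses G j x.
   If every outer vertex is wrong, x lies in the set [survivors y] of clique
   colourings on which all the G j miss the outer colouring y; the clique sees
   y, so it suffices that the clique can guarantee a correct guess on every
   colouring of [survivors y]. *)

Section Hall.
Variables (X Y : finType) (y0 : Y).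
Implicit Types (N : X -> {set Y}) (A B : {set X}) (f g : X -> Y).

(* The bipartite graph is given by the neighbourhoods N x of left vertices. *)
Definition nbh N B : {set Y} := \bigcup_(x in B) N x.

Definition hall_condition N A := forall B, B \subset A -> #|B| <= #|nbh N B|.

Definition is_matching N A f :=
  {in A &, injective f} /\ {in A, forall x, f x \in N x}.

Lemma matching_mono N N' A f :
  (forall x, N x \subset N' x) -> is_matching N A f -> is_matching N' A f.
Proof. by move=> sNN' [f_inj fN]; split=> // x /fN; apply/subsetP. Qed.

Lemma matching_glue N A B f g : is_matching N B f ->
  is_matching (fun x => N x :\: f @: B) (A :\: B) g ->
  is_matching N A (fun x => if x \in B then f x else g x).
Proof.
move=> [f_inj fN] [g_inj gN].
have gN' x : x \in A -> x \notin B -> g x \in N x /\ g x \notin f @: B.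
  by move=> xA xB; apply/setDP/gN; rewrite in_setD xB.
split=> [x x' xA x'A | x xA] /=; last first.
  by case: ifP => [/fN // | /negbT xB]; case: (gN' x xA xB).
case: ifP => xB; case: ifP => x'B.
- exact: f_inj.
- by move=> fx; have [] := gN' x' x'A (negbT x'B); rewrite -fx imset_f.
- by move=> gx; have [] := gN' x xA (negbT xB); rewrite gx imset_f.
- by apply: g_inj; rewrite in_setD ?xB ?x'B.
Qed.

Lemma hall_condition_tight N A B : B \subset A -> #|nbh N B| <= #|B| ->
  hall_condition N A -> hall_condition (fun x => N x :\: nbh N B) (A :\: B).
Proof.
move=> sBA tightB hallA C; rewrite subsetD => /andP[sCA disCB].
have hallCB : #|C :|: B| <= #|nbh N (C :|: B)| by apply: hallA; rewrite subUset sCA.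
have shrunk : nbh N C :\: nbh N B \subset nbh (fun x => N x :\: nbh N B) C.
  apply/subsetP => y /setDP[/bigcupP[x xC yNx] yB].
  by apply/bigcupP; exists x => //; apply/setDP.
move: hallCB (subset_leq_card shrunk).
rewrite /nbh bigcup_setU -/(nbh N C) -/(nbh N B) !cardsU cardsD.
rewrite (disjoint_setI0 disCB) cards0.
have := subset_leq_card (subsetIl (nbh N C) (nbh N B)).
have := subset_leq_card (subsetIr (nbh N C) (nbh N B)).
lia.
Qed.

Lemma hall_condition_slack N A x0 y : x0 \in A ->
  (forall B, B != set0 -> B \proper A -> #|B| < #|nbh N B|) ->
  hall_condition (fun x => N x :\ y) (A :\ x0).
Proof.
move=> x0A slackA B sB.
have [->|Bn0] := eqVneq B set0; first by rewrite cards0.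
have shrunk : nbh N B :\ y \subset nbh (fun x => N x :\ y) B.
  apply/subsetP => z /setD1P[zy /bigcupP[x xB zNx]].
  by apply/bigcupP; exists x => //; apply/setD1P.
move: (slackA B Bn0 (sub_proper_trans sB (properD1 x0A))) (subset_leq_card shrunk).
by rewrite (cardsD1 y (nbh N B)); case: (y \in _) => /=; lia.
Qed.

(* Hall's marriage theorem, by strong induction on #|A| distinguishing
   whether a nonempty proper tight subset exists. *)
Theorem hall N A : hall_condition N A -> exists f, is_matching N A f.
Proof.
have [k] := ubnP #|A|; elim: k N A => // k IH N A leAk hallA.
have [A0|[x0 x0A]] := set_0Vmem A.
  by exists (fun=> y0); split=> x; rewrite A0 inE.
case: (boolP [exists B : {set X}, [&& B != set0, B \proper A & #|nbh N B| <= #|B|]]).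
  case/existsP=> B /and3P[Bn0 pBA tightB]; have sBA := proper_sub pBA.
  have [f [f_inj fN]] : exists f, is_matching N B f.
    apply: IH (leq_trans (proper_card pBA) leAk) _ => C sCB.
    exact/hallA/(subset_trans sCB).
  have [g gM] : exists g, is_matching (fun x => N x :\: nbh N B) (A :\: B) g.
    apply: IH (hall_condition_tight sBA tightB hallA).
    move: Bn0 leAk (subset_leq_card sBA); rewrite cardsDS // -card_gt0; lia.
  exists (fun x => if x \in B then f x else g x); apply: matching_glue => //.
  apply: matching_mono gM => x; apply: setDS; apply/subsetP => _ /imsetP[x' x'B ->].
  by apply/bigcupP; exists x' => //; apply: fN.
rewrite negb_exists => /forallP no_tight.
have slackA B : B != set0 -> B \proper A -> #|B| < #|nbh N B|.
  by move=> Bn0 pBA; have := no_tight B; rewrite Bn0 pBA ltnNge.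
have [y yN] : exists y, y \in N x0.
  apply/card_gt0P; have := hallA [set x0].
  by rewrite sub1set x0A cards1 /nbh big_set1; apply.
have [g gM] : exists g, is_matching (fun x => N x :\ y) (A :\ x0) g.
  exact: IH (leq_trans (proper_card (properD1 x0A)) leAk) (hall_condition_slack y x0A slackA).
exists (fun x => if x \in [set x0] then (fun=> y) x else g x); apply: matching_glue.
  by split=> [x x' /set1P-> /set1P-> | x /set1P->].
by rewrite imset_set1.
Qed.

End Hall.

Lemma card_fibers_sum (T I : finType) (B : {set T}) (f : T -> I) :
  #|B| = \sum_i #|[set z in B | f z == i]|.
Proof.
rewrite -sum1_card (partition_big f predT) //=; apply: eq_bigr => i _.
by rewrite -sum1_card; apply: eq_bigl => z; rewrite inE.
Qed.

Lemma leq_sum_card_sub_fibers (T I : finType) (B : {set T}) (f : T -> I)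
    (A : I -> {set T}) :
  (forall i, A i \subset [set z in B | f z == i]) -> \sum_i #|A i| <= #|B|.
Proof.
move=> sA; rewrite (card_fibers_sum B f).
by apply: leq_sum => i _; apply: subset_leq_card.
Qed.

Lemma card_family_prod (aT rT : finType) (F : aT -> pred rT) :
  #|family F| = \prod_x #|F x|.
Proof. by rewrite card_family foldrE big_map big_enum. Qed.

Lemma card_bigcup_le (T I : finType) (P : pred I) (F : I -> {set T}) :
  #|\bigcup_(i | P i) F i| <= \sum_(i | P i) #|F i|.
Proof.
apply: (big_ind2 (fun (A : {set T}) n => #|A| <= n)) => [|A1 n1 A2 n2 le1 le2|//].
  by rewrite cards0.
by apply: leq_trans (leq_card_setU A1 A2) _; apply: leq_add.
Qed.

Lemma sub_card (T : finType) (B : {set T}) k : k <= #|B| ->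
  exists2 C : {set T}, C \subset B & #|C| = k.
Proof.
elim: k => [|k IH] le_kB; first by exists set0; rewrite ?sub0set ?cards0.
have [C sCB cardC] := IH (ltnW le_kB).
have /card_gt0P[x /setDP[xB xC]] : 0 < #|B :\: C| by rewrite cardsDS // cardC subn_gt0.
by exists (x |: C); rewrite ?subUset ?sub1set ?xB // cardsU1 xC cardC.
Qed.

(* AM-GM for one number a and e copies of b, obtained from the library's
   AM-GM inequality over the integers. *)
Lemma AGM_one_vs_many (e a b : nat) :
  e.+1 ^ e.+1 * a * b ^ e <= (a + e * b) ^ e.+1.
Proof.
pose E (i : 'I_e.+1) : int := ((if i == ord0 then a else b)%:R)%R.
have E_ge0 : {in 'I_e.+1, forall i, 0 <= E i *+ #|'I_e.+1|}%R.
  by move=> i _; rewrite mulrn_wge0.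
have := (leif_AGM_scaled E_ge0).1.
rewrite /E card_ord !big_ord_recl /= prodr_const sumr_const !card_ord.
rewrite -!mulrnA -!natrX -!natrM -natrD -natrX ler_nat.
rewrite expnMn [e.+1 ^ e.+1]expnS (mulnC b e); congr (_ <= _).
by move: (e.+1 ^ e) (b ^ e) => p r; nia.
Qed.

(* The pairs (a, b) with b^k <= a^k p (that is, b <= a p^(1/k)) are closed
   under addition. *)
Lemma pow_cone_add (k a1 a2 b1 b2 p : nat) :
  b1 ^ k.+1 <= a1 ^ k.+1 * p -> b2 ^ k.+1 <= a2 ^ k.+1 * p ->
  (b1 + b2) ^ k.+1 <= (a1 + a2) ^ k.+1 * p.
Proof.
wlog le_ratio : a1 a2 b1 b2 / b1 * a2 <= b2 * a1.
  move=> W h1 h2; have [le|/ltnW le] := leqP (b1 * a2) (b2 * a1); first exact: W.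
  by rewrite addnC [a1 + a2]addnC; apply: W.
move=> h1 h2; have [a2_0|a2_gt0] := posnP a2.
  have b2_0 : b2 = 0 by move: h2; rewrite a2_0 exp0n // leqn0 expn_eq0 => /andP[/eqP].
  by rewrite a2_0 b2_0 !addn0.
have mixed : (b1 + b2) * a2 <= b2 * (a1 + a2) by lia.
rewrite -(@leq_pmul2l (a2 ^ k.+1)) ?expn_gt0 ?a2_gt0 //.
apply: (@leq_trans ((b2 * (a1 + a2)) ^ k.+1)); first by rewrite -expnMn mulnC leq_exp2r.
by rewrite expnMn mulnCA [b2 ^ _ * _]mulnC leq_mul2l h2 orbT.
Qed.

Lemma pow_cone_sum (I : finType) (k p : nat) (a b : I -> nat) :
  (forall i, b i ^ k.+1 <= a i ^ k.+1 * p) ->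
  (\sum_i b i) ^ k.+1 <= (\sum_i a i) ^ k.+1 * p.
Proof.
move=> hab; apply: (big_ind2 (fun y x => y ^ k.+1 <= x ^ k.+1 * p)) => //.
  by rewrite exp0n.
by move=> *; apply: pow_cone_add.
Qed.

(* The arithmetic core of the induction step of the isoperimetric inequality:
   N counts the colourings, p the views of the new coordinate and S the views
   of the old ones. *)
Lemma iso_step_arith (e p N S : nat) :
  (e.+1 * N) ^ e.+1 <= S ^ e.+1 * p -> e.+2 ^ e.+2 * N ^ e.+1 <= (p + S) ^ e.+2.
Proof.
move=> hyp; have agm := AGM_one_vs_many e.+1 (e.+1 * p) S.
rewrite -mulnDr expnMn in agm.
rewrite -(@leq_pmul2l (e.+1 ^ e.+2)) ?expn_gt0 //; apply: leq_trans agm.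
move: hyp; rewrite expnMn [e.+1 ^ e.+2]expnS.
move: (e.+1 ^ e.+1) (e.+2 ^ e.+2) (N ^ e.+1) (S ^ e.+1) => A B C D hyp.
have := leq_mul (leqnn (B * e.+1)) hyp; lia.
Qed.

Section CliqueGame.
Variables d q : nat.
Local Notation coloring := {ffun 'I_d -> 'I_q}.
Implicit Types (J : {set 'I_d}) (B S U : {set coloring}) (i j : 'I_d) (v : 'I_q).

Definition view_of i (x : coloring) : {ffun 'I_d -> option 'I_q} :=
  [ffun k => if k == i then None else Some (x k)].

Definition shadow_sum J U : nat := \sum_(i in J) #|view_of i @: U|.

Definition fiber U i v : {set coloring} := [set x in U | x i == v].

(* A colouring is determined by its view from i and its colour at i. *)
Lemma card_fiber_le U i v : #|fiber U i v| <= #|view_of i @: U|.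
Proof.
rewrite -(card_in_imset (f := view_of i)); last first.
  move=> x y /setIdP[_ /eqP xv] /setIdP[_ /eqP yv] /ffunP same_view.
  apply/ffunP => k; have [->|nki] := eqVneq k i; first by rewrite xv yv.
  by have := same_view k; rewrite !ffunE (negbTE nki) => -[].
by apply/subset_leq_card/imsetS/subsetP => x /setIdP[].
Qed.

(* Views from i of distinct j-fibres are distinct, since i sees coordinate j. *)
Lemma shadow_fibers_le U i j : j != i ->
  \sum_v #|view_of i @: fiber U j v| <= #|view_of i @: U|.
Proof.
move=> nji; have [c0 _|no_color] := pickP (fun _ : 'I_q => true); last by rewrite big_pred0.
have := leq_sum_card_sub_fibers (B := view_of i @: U) (f := fun z => odflt c0 (z j)).
apply=> v; apply/subsetP => _ /imsetP[x /setIdP[xU /eqP xv] ->].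
by rewrite inE imset_f //= ffunE (negbTE nji) xv.
Qed.

(* The isoperimetric inequality, by induction on #|J|: split U into the
   fibres of a coordinate i0 of J and apply the induction hypothesis to each
   fibre with the coordinates J :\ i0. *)
Lemma isoperimetric k J U : #|J| = k.+1 -> U != set0 ->
  k.+1 ^ k.+1 * #|U| ^ k <= shadow_sum J U ^ k.+1.
Proof.
elim: k J U => [|k IH] J U cardJ Un0; have /card_gt0P[i0 i0J] : 0 < #|J| by rewrite cardJ.
  rewrite !expn1 expn0 muln1 /shadow_sum (bigD1 i0) //=.
  by apply: leq_trans (leq_addr _ _); rewrite card_gt0 imset_eq0.
set J' := J :\ i0; set p := #|view_of i0 @: U|.
have cardJ' : #|J'| = k.+1 by move: cardJ; rewrite (cardsD1 i0) i0J => -[].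
have fiber_bound v : (k.+1 * #|fiber U i0 v|) ^ k.+1
    <= shadow_sum J' (fiber U i0 v) ^ k.+1 * p.
  have [-> | ne] := eqVneq (fiber U i0 v) set0; first by rewrite cards0 muln0 exp0n.
  rewrite expnMn (expnSr #|_|) mulnA.
  exact: leq_mul (IH J' _ cardJ' ne) (card_fiber_le U i0 v).
have := pow_cone_sum fiber_bound.
rewrite -big_distrr /= -(card_fibers_sum U (fun x => x i0)).
move=> /iso_step_arith /leq_trans; apply; rewrite leq_exp2r //.
rewrite /shadow_sum (bigD1 i0) //= leq_add2l exchange_big /=.
rewrite (eq_bigl (fun i => (i \in J) && (i != i0))) => [|i]; last by rewrite !inE andbC.
by apply: leq_sum => i /andP[_ ni0]; apply: shadow_fibers_le; rewrite eq_sym.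
Qed.

Lemma small_sets_expand U : 0 < d -> #|U| <= d ^ d -> #|U| <= shadow_sum setT U.
Proof.
move=> d_gt0 small; have [->|Un0] := eqVneq U set0; first by rewrite cards0.
have cardT : #|[set: 'I_d]| = d.-1.+1 by rewrite cardsT card_ord prednK.
have iso := isoperimetric cardT Un0; rewrite prednK // in iso.
rewrite leqNgt; apply/negP => lt_shadow; move: iso; rewrite leqNgt; apply/negP/negPn.
apply: leq_trans (_ : #|U| ^ d <= _); first by rewrite ltn_exp2r.
by rewrite -[X in #|U| ^ X](prednK d_gt0) expnS leq_mul2r small orbT.
Qed.

(* The bipartite graph between colourings and the (vertex, view) pairs they
   produce; a matching in it is a guessing strategy for the clique. *)
Definition views (x : coloring) : {set 'I_d * {ffun 'I_d -> option 'I_q}} :=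
  [set (i, view_of i x) | i : 'I_d].

Lemma shadow_sum_le_nbh_views U : shadow_sum setT U <= #|nbh views U|.
Proof.
rewrite /shadow_sum (eq_bigl predT) => [|i]; last by rewrite inE.
rewrite (eq_bigr (fun i => #|pair i @: (view_of i @: U)|)) => [|i _]; last first.
  by rewrite card_imset // => z z' [].
apply: (leq_sum_card_sub_fibers (f := fst)) => i.
apply/subsetP => _ /imsetP[_ /imsetP[x xU ->] ->]; rewrite inE eqxx andbT.
by apply/bigcupP; exists x => //; apply: imset_f.
Qed.

(* If all subsets of S expand, the clique can guarantee a correct guess on
   every colouring of S: match x to a view (i, view_of i x) and let vertex i
   guess x i when it sees that view. *)
Lemma clique_strategy S : 0 < d -> 0 < q ->
  (forall B, B \subset S -> #|B| <= shadow_sum setT B) ->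
  exists h : 'I_d -> {ffun 'I_d -> option 'I_q} -> 'I_q,
    forall x, x \in S -> exists i, h i (view_of i x) = x i.
Proof.
move=> d_gt0 q_gt0 expandS.
have hallS : hall_condition views S.
  by move=> B sBS; apply: leq_trans (expandS B sBS) (shadow_sum_le_nbh_views B).
have [f [f_inj f_views]] := hall (Ordinal d_gt0, [ffun=> None]) hallS.
exists (fun i z => if [pick x in S | f x == (i, z)] is Some x then x i else Ordinal q_gt0).
move=> x xS; have /imsetP[i _ fx] := f_views x xS; exists i.
case: pickP => [x' /andP[x'S /eqP fx'] | none]; last by have := none x; rewrite xS fx eqxx.
by rewrite (f_inj x' x) // fx' fx.
Qed.

End CliqueGame.

Section CoveringFamily.
Variables (P : finType) (q m K : nat).
Implicit Types (B : {set P}) (c : 'I_q) (cc : {ffun 'I_m -> 'I_q}).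

Definition covers (g : P -> 'I_q) B := forall c, exists2 x, x \in B & g x = c.

Definition avoiding B c : {set {ffun P -> 'I_q}} :=
  [set g : {ffun P -> 'I_q} | [forall x in B, g x != c]].

Lemma card_avoiding B c : #|avoiding B c| = q.-1 ^ #|B| * q ^ (#|P| - #|B|).
Proof.
have -> : #|avoiding B c| = #|family (fun x => if x \in B then predC1 c else predT)|.
  apply: eq_card => g; rewrite !inE; apply/forall_inP/familyP => avoid x.
    by case: ifP => [/avoid|]; rewrite ?inE.
  by move=> xB; have := avoid x; rewrite xB inE.
rewrite card_family_prod (bigID (mem B)) /=.
rewrite (eq_bigr (fun _ => q.-1)) => [|x xB]; last by rewrite xB cardC1 card_ord.
rewrite [X in _ * X](eq_bigr (fun _ => q)) => [|x xB]; last by rewrite (negbTE xB) card_ord.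
by rewrite !prod_nat_const -(cardC (mem B)) addKn.
Qed.

Definition avoiding_family B cc : {set {ffun 'I_m -> {ffun P -> 'I_q}}} :=
  [set G : {ffun 'I_m -> {ffun P -> 'I_q}} | [forall j, G j \in avoiding B (cc j)]].

Lemma card_avoiding_family B cc :
  #|avoiding_family B cc| = (q.-1 ^ #|B| * q ^ (#|P| - #|B|)) ^ m.
Proof.
have -> : #|avoiding_family B cc| = #|family (fun j => mem (avoiding B (cc j)))|.
  by apply: eq_card => G; rewrite !inE; apply/forallP/familyP.
rewrite card_family_prod (eq_bigr (fun _ => q.-1 ^ #|B| * q ^ (#|P| - #|B|))).
  by rewrite prod_nat_const card_ord.
by move=> j _; rewrite card_avoiding.
Qed.

Definition uncovering_families : {set {ffun 'I_m -> {ffun P -> 'I_q}}} :=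
  \bigcup_(B : {set P} | #|B| == K) \bigcup_(cc : {ffun 'I_m -> 'I_q}) avoiding_family B cc.

Lemma card_uncovering_families : 0 < q ->
  'C(#|P|, K) * q ^ m * q.-1 ^ (K * m) < q ^ (K * m) ->
  #|uncovering_families| < #|{ffun 'I_m -> {ffun P -> 'I_q}}|.
Proof.
move=> q_gt0 count; apply: leq_ltn_trans (card_bigcup_le _ _) _.
apply: (@leq_ltn_trans
  (\sum_(B : {set P} | #|B| == K) q ^ m * (q.-1 ^ K * q ^ (#|P| - K)) ^ m)).
  apply: leq_sum => B /eqP cardB; apply: leq_trans (card_bigcup_le _ _) _.
  rewrite (eq_bigr _ (fun cc _ => card_avoiding_family B cc)) sum_nat_const.
  by rewrite card_ffun !card_ord cardB.
rewrite sum_nat_const (eq_card (B := [set B : {set P} | #|B| == K])) => [|B].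
  rewrite card_draws !card_ffun !card_ord.
  have [leKP|ltPK] := leqP K #|P|; last by rewrite bin_small // !mul0n !expn_gt0 q_gt0.
  rewrite expnMn -!expnM -[in X in _ < X](subnKC leKP) mulnDl expnD !mulnA.
  by rewrite ltn_pmul2r // expn_gt0 q_gt0.
by rewrite inE.
Qed.

Lemma covering_family_exists : 0 < q ->
  'C(#|P|, K) * q ^ m * q.-1 ^ (K * m) < q ^ (K * m) ->
  exists G : 'I_m -> P -> 'I_q, forall B, #|B| = K -> exists j, covers (G j) B.
Proof.
move=> q_gt0 count.
have /card_gt0P[G] : 0 < #|~: uncovering_families|.
  move: (card_uncovering_families q_gt0 count).
  by rewrite -(cardsC uncovering_families); lia.
rewrite inE => G_covers; exists (fun j x => G j x) => B cardB.
case: (boolP [exists j, [forall c, [exists x in B, G j x == c]]]).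
  case/existsP=> j /forallP cov; exists j => c.
  by have /exists_inP[x xB /eqP] := cov c; exists x.
rewrite negb_exists => /forallP uncov; case/negP: G_covers.
pose cc := [ffun j => odflt (Ordinal q_gt0) [pick c | [forall x in B, G j x != c]]].
apply/bigcupP; exists B; first by rewrite cardB.
apply/bigcupP; exists cc => //; rewrite inE; apply/forallP => j; rewrite inE ffunE.
case: pickP => [c //|none].
have /existsP[c /exists_inPn missed] : [exists c, ~~ [exists x in B, G j x == c]].
  by rewrite -negb_forall uncov.
by move: (none c) => /negbT/negP; case; apply/forall_inP.
Qed.

End CoveringFamily.

Lemma bin_le_exp n k : 'C(n, k) <= n ^ k.
Proof.
apply: leq_trans (leq_pmulr _ (fact_gt0 k)) _; rewrite bin_ffact ffact_prod.
apply: (@leq_trans (\prod_(i < k) n)); last by rewrite prod_nat_const card_ord.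
by apply: leq_prod => i _; apply: leq_subr.
Qed.

Lemma bernoulli_nat a n : a ^ n + n * a ^ n.-1 <= a.+1 ^ n.
Proof.
elim: n => [|n IH]; first by rewrite !expn0 mul0n.
apply: (@leq_trans (a.+1 * (a ^ n + n * a ^ n.-1))); last by rewrite expnS leq_mul2l IH orbT.
case: n {IH} => [|n]; first by rewrite expn1 expn0; lia.
by rewrite /= !expnS; move: (a ^ n) => b; nia.
Qed.

Lemma pred_pow_half q : 0 < q -> 2 * q.-1 ^ q <= q ^ q.
Proof.
case: q => [//|a] _ /=; apply: leq_trans (bernoulli_nat a a.+1).
by rewrite mul2n -addnn leq_add2l /= expnS leq_mul2r ltnW ?orbT.
Qed.

Lemma exponent_bound d a : 2 <= d ->
  d * (d - 2) * (d * (a + 1) + a * d ^ 3) <= (a + 1) * d ^ 5.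
Proof.
move=> d2; have [e ->] : exists e, d = e + 2 by exists (d - 2); lia.
by rewrite addnK; nia.
Qed.

(* The counting condition of [covering_family_exists] for the book graph:
   with t = K d^5 we have K m = q t, the bad events number at most
   q^(dK + m) < 2^t and each has probability at most (1 - 1/q)^(K m) <= 2^-t. *)
Lemma counting_condition d q K m : 4 <= d ->
  q = d ^ (d - 2) -> K = d ^ d + 1 -> m = d ^ d * d ^ 3 ->
  'C(q ^ d, K) * q ^ m * q.-1 ^ (K * m) < q ^ (K * m).
Proof.
move=> d4 qE KE mE; set t := K * d ^ 5.
have dd_eq : d ^ d = q * d ^ 2 by rewrite qE -expnD subnK //; lia.
have q_gt0 : 0 < q by rewrite qE expn_gt0 (leq_trans _ d4).
have q_lt : q < 2 ^ (d * (d - 2)).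
  rewrite qE expnM ltn_exp2r; first exact: ltn_expl.
  by rewrite subn_gt0 (leq_trans _ d4).
have binom : 'C(q ^ d, K) <= q ^ (d * K) by rewrite expnM; apply: bin_le_exp.
have pred_bound : 2 ^ t * q.-1 ^ (K * m) <= q ^ (K * m).
  have -> : K * m = q * t by rewrite mE /t dd_eq !expnS expn0; lia.
  rewrite expnM -expnMn (expnM q) leq_exp2r ?pred_pow_half //.
  by rewrite /t KE muln_gt0 expn_gt0; lia.
have q_small : q ^ (d * K + m) < 2 ^ t.
  apply: leq_trans (_ : (2 ^ (d * (d - 2))) ^ (d * K + m) <= 2 ^ t).
    by rewrite ltn_exp2r // KE; lia.
  by rewrite -expnM leq_exp2l // /t KE mE; apply: exponent_bound; lia.
rewrite -(ltn_pmul2l (expn_gt0 2 t)).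
apply: (@leq_ltn_trans (q ^ (d * K + m) * q ^ (K * m))).
  by rewrite expnD mulnCA; apply: leq_mul => //; apply: leq_mul.
by rewrite ltn_pmul2r // expn_gt0 q_gt0.
Qed.

Lemma vacuous_covering_family d q m : 0 < q -> q ^ d <= d ^ d ->
  exists G : 'I_m -> {ffun 'I_d -> 'I_q} -> 'I_q,
    forall B : {set {ffun 'I_d -> 'I_q}}, #|B| = d ^ d + 1 -> exists j, covers (G j) B.
Proof.
move=> q_gt0 few; exists (fun _ _ => Ordinal q_gt0) => B cardB; exfalso.
by have := max_card (mem B); rewrite card_ffun !card_ord cardB addn1 ltnNge few.
Qed.

Section BookStrategy.
Variables (d q m : nat) (G : 'I_m -> {ffun 'I_d -> 'I_q} -> 'I_q).
Hypotheses (d_gt0 : 0 < d) (q_gt0 : 0 < q).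
Hypothesis G_covers : forall B : {set {ffun 'I_d -> 'I_q}},
  #|B| = d ^ d + 1 -> exists j, covers (G j) B.

Definition survivors (y : {ffun 'I_m -> 'I_q}) : {set {ffun 'I_d -> 'I_q}} :=
  [set x | [forall j, G j x != y j]].

(* A survivor set contains no (d^d+1)-set, so all its subsets are small. *)
Lemma survivors_expand y (B : {set {ffun 'I_d -> 'I_q}}) :
  B \subset survivors y -> #|B| <= shadow_sum setT B.
Proof.
move=> sB; have [small|big] := leqP #|B| (d ^ d); first exact: small_sets_expand.
have [C sCB cardC] := sub_card big.
have [j /(_ (y j))[x xC Gx]] := G_covers (etrans cardC (esym (addn1 _))).
have := subsetP sB x (subsetP sCB x xC).
by rewrite inE => /forallP/(_ j); rewrite Gx eqxx.
Qed.

(* Outer vertex j guesses G j of the clique colouring; clique vertex i plays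
   the clique strategy for the survivor set of the outer colouring it sees. *)
Lemma book_winnable : hat_winnable (book_adj d m) q.
Proof.
pose clique_wins y (h : 'I_d -> {ffun 'I_d -> option 'I_q} -> 'I_q) :=
  forall x, x \in survivors y -> exists i, h i (view_of i x) = x i.
have [H H_wins] : exists H, forall y, clique_wins y (H y).
  by apply: fin_all_exists => y; apply: clique_strategy => // B; apply: survivors_expand.
pose clique_of (c : ('I_d + 'I_m)%type -> 'I_q) : {ffun 'I_d -> 'I_q} := [ffun i => c (inl i)].
pose outer_of (c : ('I_d + 'I_m)%type -> 'I_q) : {ffun 'I_m -> 'I_q} := [ffun j => c (inr j)].
exists (fun v c => match v with
  | inl i => H (outer_of c) i (view_of i (clique_of c))
  | inr j => G j (clique_of c) end).
split=> [[i|j] c c' same_nbrs /= | c].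
- have -> : outer_of c = outer_of c' by apply/ffunP => j; rewrite !ffunE same_nbrs.
  have -> // : view_of i (clique_of c) = view_of i (clique_of c').
  apply/ffunP => k; rewrite !ffunE; case: eqVneq => // nik.
  by rewrite same_nbrs //= eq_sym.
- by have -> : clique_of c = clique_of c' by apply/ffunP => k; rewrite !ffunE same_nbrs.
case: (boolP [exists j, G j (clique_of c) == outer_of c j]) => [/existsP[j /eqP Gj]|].
  by exists (inr j); rewrite /= Gj ffunE.
rewrite negb_exists => /forallP wrong.
have [|i Hi] := H_wins (outer_of c) (clique_of c); first by rewrite inE; apply/forallP.
by exists (inl i); rewrite /= Hi ffunE.
Qed.

End BookStrategy.

Lemma book_colors_eq d : 2 <= d -> d ^ d %/ d ^ 2 = d ^ (d - 2).
Proof. by move=> d2; rewrite -{2}(subnK d2) expnD mulnK // expn_gt0 (leq_trans _ d2). Qed.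

Theorem mainTheorem4 (d : nat) :
  1 <= d -> HG_ge (book_adj d (d ^ d * d ^ 3)) (d ^ d %/ d ^ 2).
Proof.
move=> d_gt0; set q := d ^ d %/ d ^ 2; exists q; split => //.
have q_gt0 : 0 < q.
  have [d2 | d_lt2] := leqP 2 d; first by rewrite /q book_colors_eq // expn_gt0 d_gt0.
  by rewrite /q; clear -d_gt0 d_lt2; case: d d_gt0 d_lt2 => [|[]].
suff [G G_covers] : exists G : 'I_(d ^ d * d ^ 3) -> {ffun 'I_d -> 'I_q} -> 'I_q,
    forall B : {set {ffun 'I_d -> 'I_q}}, #|B| = d ^ d + 1 -> exists j, covers (G j) B.
  exact: book_winnable G_covers.
have [d_small|d_large] := ltnP d 4.
  apply: vacuous_covering_family q_gt0 _; rewrite /q.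
  by clear -d_gt0 d_small; case: d d_gt0 d_small => [|[|[|[|]]]].
apply: covering_family_exists q_gt0 _; rewrite card_ffun !card_ord.
by apply: counting_condition; rewrite ?/q ?book_colors_eq //; lia.
Qed.
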